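(* Let $k\ge1$ be an integer, let $G=(V,E)$ be an undirected graph with edges partitioned into unsafe edges $\mathscr{U}$ and safe edges $\mathscr{S}$ and with nonnegative costs $\{c_e\}_{e\in E}$, let $r\in V$, and let $F\subseteq E$ be a feasible solution for $k$-FGC. Consider the digraph $D=(V,A)$ where, for each unsafe edge $e=uv\in F\cap\mathscr{U}$, $A$ contains one bidirected pair $\{(u,v),(v,u)\}$ arising from $e$, and for each safe edge $e=uv\in F\cap\mathscr{S}$, $A$ contains $k+1$ (distinct, parallel) bidirected pairs arising from $e$; each arc is given the cost of the edge it arises from. Then $D$ contains an $r$-out $(k+1)$-arborescence of cost at most $(k+1)c(F)$.
   Context: $F\subseteq E$ is feasible for $k$-FGC if for every $X\subseteq F\cap\mathscr{U}$ with $|X|\le k$, the subgraph $(V,F\setminus X)$ is connected; $c(F)=\sum_{e\in F}c_e$. An $r$-out arborescence $(V,T)$ in $D$ is a subgraph such that the undirected version of $T$ is acyclic and for every $v\in V\setminus\{r\}$ there is a directed $r\to v$ path in $(V,T)$. An $r$-out $(k+1)$-arborescence is a subgraph $(V,T)$ of $D$ whose arc set can be partitioned into $k+1$ arc-disjoint $r$-out arborescences; its cost is the sum of the costs of its arcs. *)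

From mathcomp Require Import all_boot all_order all_algebra.
Set Implicit Arguments. Unset Strict Implicit. Unset Printing Implicit Defensive.
Import Order.TTheory GRing.Theory Num.Theory.

(* Undirected multigraph G = (V, E): each edge e has endpoints ends e = (u, v).
   Unsafe edges form the set U; safe edges are its complement. *)

Section Defs.
Variables (V E : finType) (ends : E -> V * V).

Definition adj (F : {set E}) : rel V :=
  fun x y => [exists e in F, ((ends e).1 == x) && ((ends e).2 == y)
                          || ((ends e).1 == y) && ((ends e).2 == x)].

Definition connectedE (F : {set E}) : Prop := forall x y : V, connect (adj F) x y.

Definition feasible (U : {set E}) (k : nat) (F : {set E}) : Prop :=
  forall X : {set E}, X \subset F :&: U -> #|X| <= k -> connectedE (F :\: X).

(* Arcs of the digraph D: (e, i, b) is the i-th copy of the bidirected pair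
   arising from e, oriented u->v if b = false and v->u if b = true. *)
Definition Arc (k : nat) : finType := (E * 'I_k.+1 * bool)%type.
Definition arc_edge k (a : Arc k) : E := a.1.1.
Definition tail k (a : Arc k) : V :=
  if a.2 then (ends a.1.1).2 else (ends a.1.1).1.
Definition head k (a : Arc k) : V :=
  if a.2 then (ends a.1.1).1 else (ends a.1.1).2.

(* Arc set A of D: one pair (copy 0) for unsafe edges of F,
   k+1 pairs for safe edges of F. *)
Definition arcsD (U : {set E}) (k : nat) (F : {set E}) : {set Arc k} :=
  [set a : Arc k | (a.1.1 \in F) && ((a.1.1 \in U) ==> (val a.1.2 == 0%N))].

Definition darc k (T : {set Arc k}) : rel V :=
  fun x y => [exists a in T, (tail a == x) && (head a == y)].
Definition uarc k (T : {set Arc k}) : rel V :=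
  fun x y => [exists a in T, (tail a == x) && (head a == y)
                          || (tail a == y) && (head a == x)].

(* The undirected version of T is acyclic (a forest, loops and parallel
   pairs count as cycles): no arc lies on a cycle, i.e. for every arc its
   endpoints are not connected by the remaining arcs. *)
Definition uacyclic k (T : {set Arc k}) : Prop :=
  forall a, a \in T -> ~~ connect (uarc (T :\ a)) (tail a) (head a).

Definition r_out_arborescence k (r : V) (T : {set Arc k}) : Prop :=
  uacyclic T /\ forall v : V, v != r -> connect (darc T) r v.

Definition r_out_karb k (Aset : {set Arc k}) (r : V) (T : {set Arc k}) : Prop :=
  T \subset Aset /\
  exists P : 'I_k.+1 -> {set Arc k},
    [/\ (forall i j, i != j -> [disjoint P i & P j]),
        \bigcup_(i < k.+1) P i = T &
        forall i, r_out_arborescence r (P i)].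

End Defs.

From Pilot Require Import Defs.
From mathcomp Require Import all_boot all_order all_algebra.
Import Order.TTheory GRing.Theory Num.Theory.

Set Implicit Arguments. Unset Strict Implicit. Unset Printing Implicit Defensive.

(* Every nonempty X avoiding r is entered by at least k+1 arcs of D: either a safe
   edge of F crosses X and contributes k+1 arcs, or all crossing edges are unsafe
   and feasibility forces more than k of them.  By Edmonds' branching theorem D then
   contains k+1 arc-disjoint spanning r-arborescences.  We prove Edmonds' theorem by
   Lovasz's argument: grow one arborescence from r, always adding an arc that enters
   no tight set (a set entered by exactly k remaining arcs; tight sets are closed
   under intersection by submodularity of in-degrees), so that the remaining arcs
   still satisfy the cut condition with k in place of k+1.  An arborescence uses at
   most one arc per edge, since two arcs of one edge either share their head or form
   a directed 2-cycle; so each of the k+1 arborescences costs at most c(F). *)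

Lemma connect_fwd_closed (T : finType) (e : rel T) (C : {set T}) x y :
  (forall u v, u \in C -> e u v -> v \in C) -> x \in C -> connect e x y -> y \in C.
Proof.
move=> closedC xC /connectP[p pth ->]; elim: p x xC pth => //= z p IH x xC.
by case/andP=> exz pz; exact: IH (closedC _ _ xC exz) pz.
Qed.

Lemma connect_last_step (T : finType) (e : rel T) x z :
  connect e x z -> x != z -> exists2 y, connect e x y & e y z.
Proof.
case/connectP=> p; elim/last_ind: p => [|p y _] /=; first by move=> _ ->; rewrite eqxx.
rewrite rcons_path last_rcons => /andP[pth eyz] -> _.
by exists (last x p) => //; apply/connectP; exists p.
Qed.

Section Digraph.
Variables (V A : finType) (tl hd : A -> V) (r : V).

Definition arcrel (B : {set A}) : rel V :=
  fun x y => [exists a in B, (tl a == x) && (hd a == y)].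
Definition uarcrel (B : {set A}) : rel V :=
  fun x y => [exists a in B, (tl a == x) && (hd a == y) || (tl a == y) && (hd a == x)].

Lemma arcrel_sub (B B' : {set A}) : B \subset B' -> subrel (arcrel B) (arcrel B').
Proof.
move=> sBB' x y /exists_inP[a aB axy]; apply/exists_inP; exists a => //.
exact: subsetP aB.
Qed.

Definition enters (X : {set V}) (a : A) := (hd a \in X) && (tl a \notin X).
Definition indeg (S : {set A}) (X : {set V}) := #|[set a in S | enters X a]|.
Definition rcut (X : {set V}) := (r \notin X) && (X != set0).

Lemma indegE (S : {set A}) X : indeg S X = \sum_(a in S) enters X a.
Proof.
by rewrite /indeg -sum1dep_card big_mkcondr; apply: eq_bigr => a _; case: enters.
Qed.

Lemma indeg_submod (S : {set A}) X Y :
  indeg S (X :|: Y) + indeg S (X :&: Y) <= indeg S X + indeg S Y.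
Proof.
rewrite !indegE -!big_split /=; apply: leq_sum => a _.
by rewrite /enters !inE; do 4!case: (_ \in _).
Qed.

Lemma indeg_setD1 (S : {set A}) a X : a \in S ->
  indeg S X = indeg (S :\ a) X + enters X a.
Proof.
move=> aS; rewrite !indegE (bigD1 a aS) addnC; congr (_ + _).
by apply: eq_bigl => b; rewrite !inE andbC.
Qed.

Lemma indeg_lt_arc (S : {set A}) X Y : indeg S X < indeg S Y ->
  exists2 a, a \in S & enters Y a && ~~ enters X a.
Proof.
rewrite ltnNge => leYX.
have /subsetPn[a] : ~~ ([set a in S | enters Y a] \subset [set a in S | enters X a]).
  by apply: contra leYX => /subset_leq_card.
by rewrite !inE => /andP[aS eY]; rewrite aS /= => eX; exists a; rewrite ?eY.
Qed.

Definition ranked (B : {set A}) (rk : V -> nat) :=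
  {in B, forall a, rk (tl a) < rk (hd a)}.

Definition ranked_arb (B : {set A}) :=
  [/\ {in B &, injective hd}, exists rk, ranked B rk &
      forall v, connect (arcrel B) r v].

Lemma ranked_connect_le B rk x y :
  ranked B rk -> connect (arcrel B) x y -> rk x <= rk y.
Proof.
move=> rkB; have closed_ge u v : u \in [set z | rk x <= rk z] ->
    arcrel B u v -> v \in [set z | rk x <= rk z].
  rewrite !inE => le_xu /exists_inP[a aB /andP[/eqP tla /eqP hda]].
  by rewrite -hda (leq_trans le_xu) // -tla ltnW // rkB.
by move/(connect_fwd_closed closed_ge); rewrite !inE leqnn => /(_ isT).
Qed.

Lemma ranked_arb_acyclic B : ranked_arb B ->
  forall a, a \in B -> ~~ connect (uarcrel (B :\ a)) (tl a) (hd a).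
Proof.
case=> hd_inj [rk rkB] _ a aB.
pose D := [set x | connect (arcrel B) (hd a) x].
have arcD b : b \in B -> tl b \in D -> hd b \in D.
  rewrite !inE => bB /connect_trans; apply; apply: connect1.
  by apply/exists_inP; exists b; rewrite ?eqxx.
(* The only arc of B entering a vertex of D from outside D is a itself. *)
have closedCD u v : u \in ~: D -> uarcrel (B :\ a) u v -> v \in ~: D.
  rewrite !inE => uD /exists_inP[b /setD1P[ba bB]].
  case/orP=> /andP[/eqP tlb /eqP hdb]; apply: contra uD => vD; last first.
    by have := arcD b bB; rewrite !inE tlb hdb; apply.
  have hda_v : hd a != v.
    by apply: (contraNneq _ ba) => hdav; rewrite (hd_inj b a) ?hdb.
  have [y ay] := connect_last_step vD hda_v.
  move=> /exists_inP[b' b'B /andP[/eqP tlb' /eqP hdb']].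
  by rewrite -tlb (hd_inj b b') ?tlb' ?hdb ?hdb'.
have tlD : tl a \in ~: D.
  by rewrite !inE; apply: contraTN (rkB a aB) => /(ranked_connect_le rkB); rewrite leqNgt.
by apply/negP => /(connect_fwd_closed closedCD tlD); rewrite !inE connect0.
Qed.

Section Grow.
Variables (n : nat) (S : {set A}).
Hypothesis cutS : forall X, rcut X -> n < indeg S X.

Record partial_arb (B : {set A}) (T : {set V}) : Prop := {
  pa_sub : B \subset S;
  pa_root : r \in T;
  pa_inside : {in B, forall a, (tl a \in T) && (hd a \in T)};
  pa_inj : {in B &, injective hd};
  pa_rank : exists rk, ranked B rk;
  pa_reach : {in T, forall v, connect (arcrel B) r v};
  pa_cut : forall X, rcut X -> n <= indeg (S :\: B) X }.

Definition tight (B : {set A}) (X : {set V}) := rcut X && (indeg (S :\: B) X == n).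

Lemma indeg_outside B T (X : {set V}) : partial_arb B T -> [disjoint X & T] ->
  indeg (S :\: B) X = indeg S X.
Proof.
move=> pa dXT; apply: eq_card => a; rewrite !inE /enters.
case aB: (a \in B) => //=; have /andP[_ hdT] := pa_inside pa aB.
by rewrite (disjointFl dXT hdT) andbF.
Qed.

Lemma tight_meet B (X Y : {set V}) :
    (forall Z, rcut Z -> n <= indeg (S :\: B) Z) ->
  tight B X -> tight B Y -> X :&: Y != set0 -> tight B (X :&: Y).
Proof.
move=> cutB /andP[/andP[rX X0] /eqP dX] /andP[/andP[rY _] /eqP dY] XY0.
have cutI : rcut (X :&: Y) by rewrite /rcut inE negb_and rX.
have cutU : rcut (X :|: Y) by rewrite /rcut inE negb_or rX rY setU_eq0 negb_and X0.
rewrite /tight cutI eqn_leq cutB // andbT -(leq_add2l n).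
have := indeg_submod (S :\: B) X Y; rewrite dX dY.
by apply: leq_trans; rewrite leq_add2r cutB.
Qed.

Lemma min_tight_safe_arc B T W : partial_arb B T -> tight B W -> ~~ (W \subset T) ->
    (forall W', tight B W' -> ~~ (W' \subset T) -> #|W| <= #|W'|) ->
  exists a, [/\ a \in S :\: B, tl a \in T, hd a \notin T &
                forall W', tight B W' -> ~~ enters W' a].
Proof.
move=> pa tW WT minW.
have cutWT : rcut (W :\: T).
  case/andP: tW => /andP[rW _] _; rewrite /rcut inE negb_and rW orbT /=.
  by apply: contraNneq WT => /eqP; rewrite setD_eq0.
have [a aSB /andP[eWT neW]] :
    exists2 a, a \in S :\: B & enters (W :\: T) a && ~~ enters W a.
  have dWT : [disjoint W :\: T & T] by rewrite disjoints_subset setDE subsetIr.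
  apply: indeg_lt_arc; rewrite (indeg_outside pa dWT).
  by case/andP: tW => _ /eqP ->; apply: cutS.
move: eWT neW; rewrite /enters !inE => /andP[/andP[hdT hdW]] tlWT.
rewrite hdW /= negbK => tlW; move: tlWT; rewrite tlW andbT negbK => tlT.
exists a; split => // W' tW'; apply/negP => /andP[hdW' tlW'].
(* Uncrossing: W :&: W' would be a smaller tight set not inside T. *)
have tWW' : tight B (W :&: W').
  by apply: tight_meet (pa_cut pa) _ _ _ => //; apply/set0Pn; exists (hd a); rewrite inE hdW.
have WW'T : ~~ (W :&: W' \subset T).
  by apply/subsetPn; exists (hd a); rewrite ?inE ?hdW.
have := minW _ tWW' WW'T; rewrite leqNgt proper_card //.
apply/properP; split; first exact: subsetIl.
by exists (tl a); rewrite // inE (negbTE tlW') andbF.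
Qed.

Lemma safe_arc B T : partial_arb B T -> T != setT ->
  exists a, [/\ a \in S :\: B, tl a \in T, hd a \notin T &
                forall W, tight B W -> ~~ enters W a].
Proof.
move=> pa T_ne.
have [/existsP[W0 W0P] | /existsPn no_tight] :=
  boolP [exists W, tight B W && ~~ (W \subset T)].
  case: (@arg_minnP _ W0 (fun W => tight B W && ~~ (W \subset T)) (fun W => #|W|) W0P).
  move=> W /andP[tW WT] minW; apply: min_tight_safe_arc pa tW WT _.
  by move=> W' tW' W'T; apply: minW; rewrite tW' W'T.
have cutCT : rcut (~: T).
  by rewrite /rcut inE negbK (pa_root pa) -setCT (inj_eq (@setC_inj _)).
have := cutS cutCT; rewrite -(indeg_outside pa) ?disjoints_subset //.
move=> /(leq_ltn_trans (leq0n n)); rewrite card_gt0 => /set0Pn[a].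
rewrite inE => /andP[aSB]; rewrite /enters !inE negbK => /andP[hdT tlT].
exists a; split => // W tW; apply/negP => /andP[hdW _].
have /subsetP/(_ _ hdW) : W \subset T by have := no_tight W; rewrite tW negbK.
by rewrite (negbTE hdT).
Qed.

Lemma extend B T : partial_arb B T -> T != setT ->
  exists a, partial_arb (a |: B) (hd a |: T) /\ hd a \notin T.
Proof.
move=> pa T_ne; have [a [aSB tlT hdT safe]] := safe_arc pa T_ne.
have /setDP[aS aB] := aSB.
have hdB b : b \in B -> hd b != hd a.
  by move=> /(pa_inside pa)/andP[_]; apply: contraTneq => ->.
have tla : tl a != hd a by apply: contraNneq hdT => <-.
case: pa => subB rT insideB injB [rk rkB] reachT cutB.
exists a; split => //; split.
- by rewrite subUset sub1set aS.
- by rewrite inE rT orbT.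
- move=> b /setU1P[-> | bB]; first by rewrite !inE eqxx tlT orbT.
  by case/andP: (insideB b bB) => tlbT hdbT; rewrite !inE tlbT hdbT !orbT.
- move=> b1 b2 /setU1P[-> | b1B] /setU1P[-> | b2B] //.
  + by move/esym/eqP; rewrite (negbTE (hdB _ b2B)).
  + by move/eqP; rewrite (negbTE (hdB _ b1B)).
  + exact: injB.
- exists (fun x => if x == hd a then (rk (tl a)).+1 else rk x).
  move=> b /setU1P[-> | bB]; first by rewrite eqxx (negbTE tla).
  have /andP[tlbT _] := insideB b bB.
  rewrite (negbTE (hdB b bB)) ifN ?rkB //; by apply: contraNneq hdT => <-.
- have reachB v : connect (arcrel B) r v -> connect (arcrel (a |: B)) r v.
    by apply: connect_sub => x y /(arcrel_sub (subsetUr [set a] B)); apply: connect1.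
  move=> v /setU1P[-> | vT]; last exact/reachB/reachT.
  apply: (connect_trans (reachB _ (reachT _ tlT))); apply: connect1.
  by apply/exists_inP; exists a; rewrite ?setU11 ?eqxx.
- move=> X cutX; have := cutB X cutX.
  have -> : S :\: (a |: B) = (S :\: B) :\ a by apply/setP => b; rewrite !inE negb_or andbA.
  rewrite (indeg_setD1 X aSB); case: (boolP (enters X a)) => [eXa | _]; last by rewrite addn0.
  have := contraL (safe X) eXa; rewrite /tight cutX (indeg_setD1 X aSB) eXa addn1 /=.
  by rewrite leq_eqVlt eq_sym => /negbTE ->.
Qed.

Lemma partial_arb_complete B T : partial_arb B T ->
  exists B' : {set A},
    [/\ B' \subset S, ranked_arb B' & forall X, rcut X -> n <= indeg (S :\: B') X].
Proof.
have [m] := ubnP #|~: T|; elim: m B T => // m IH B T ltTm pa.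
have [T_full | T_ne] := eqVneq T setT.
  exists B; split; [exact: pa_sub pa | split | exact: pa_cut pa].
  - exact: pa_inj pa.
  - exact: pa_rank pa.
  - by move=> v; apply: (pa_reach pa); rewrite T_full inE.
have [a [pa' hdT]] := extend pa T_ne; apply: (IH _ _ _ pa').
by rewrite -ltnS (leq_trans _ ltTm) // ltnS proper_card // properC properUr // sub1set.
Qed.

Lemma ranked_arb_keeping_cut :
  exists B : {set A},
    [/\ B \subset S, ranked_arb B & forall X, rcut X -> n <= indeg (S :\: B) X].
Proof.
apply: (@partial_arb_complete set0 [set r]); split.
- exact: sub0set.
- exact: set11.
- by move=> a; rewrite in_set0.
- by move=> a b; rewrite in_set0.
- by exists (fun _ => 0) => a; rewrite in_set0.
- by move=> v /set1P ->.
- by move=> X cutX; rewrite setD0 ltnW ?cutS.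
Qed.
End Grow.

Lemma disjoint_ranked_arbs n S : (forall X, rcut X -> n <= indeg S X) ->
  exists P : nat -> {set A},
    [/\ forall i j, i < n -> j < n -> i != j -> [disjoint P i & P j],
        forall i, i < n -> P i \subset S &
        forall i, i < n -> ranked_arb (P i)].
Proof.
elim: n S => [|n IH] S cutS; first by exists (fun _ => set0).
have [B [BS arbB cutSB]] := ranked_arb_keeping_cut cutS.
have [P [disjP PS arbP]] := IH _ cutSB.
have disjBP j : j < n -> [disjoint B & P j].
  move=> jn; rewrite disjoint_sym disjoints_subset (subset_trans (PS j jn)) //.
  by rewrite setDE subsetIr.
exists (fun i => if i is j.+1 then P j else B); split.
- case=> [|i] [|j] //= ilt jlt ij; first exact: disjBP.
    by rewrite disjoint_sym disjBP.
  exact: disjP.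
- by case=> [|i] //= ilt; apply: subset_trans (PS i ilt) (subsetDl _ _).
- by case=> [|i] //= ilt; apply: arbP.
Qed.
End Digraph.

Lemma ler_sum_subset (R : numDomainType) (I : finType) (Y Z : {set I}) (f : I -> R) :
  (forall i, 0 <= f i)%R -> Y \subset Z -> (\sum_(i in Y) f i <= \sum_(i in Z) f i)%R.
Proof.
move=> f_ge0 sYZ; rewrite [leRHS](big_setID Y) /= (setIidPr sYZ) lerDl.
exact: sumr_ge0.
Qed.

Section FaultTolerantConnectivity.
Variables (V E : finType) (ends : E -> V * V) (U : {set E}) (k : nat) (r : V) (F : {set E}).
Local Notation tl := (@Defs.tail V E ends k).
Local Notation hd := (@Defs.head V E ends k).

Definition crossing (X : {set V}) (e : E) := ((ends e).1 \in X) != ((ends e).2 \in X).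

Lemma adj_uncrossed_closed X : closed (adj ends (F :\: [set e in F | crossing X e])) X.
Proof.
move=> x y /exists_inP[e /setDP[eF]]; rewrite inE eF /= negbK => /eqP sameX.
by case/orP=> /andP[/eqP <- /eqP <-].
Qed.

Lemma feasible_crossing_card X : feasible ends U k F -> rcut r X ->
  [set e in F | crossing X e] \subset U -> k < #|[set e in F | crossing X e]|.
Proof.
move=> feas /andP[rX /set0Pn[x xX]] CU; rewrite ltnNge; apply/negP => Ck.
have CFU : [set e in F | crossing X e] \subset F :&: U.
  by rewrite subsetI CU andbT; apply/subsetP => e; rewrite inE => /andP[].
have := feas _ CFU Ck r x.
by move/(closed_connect (@adj_uncrossed_closed X)); rewrite xX (negbTE rX).
Qed.

Lemma arcsD_indeg : feasible ends U k F ->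
  forall X, rcut r X -> k < indeg tl hd (arcsD U k F) X.
Proof.
move=> feas X cutX.
pose copy e i : Arc E k := (e, i, (ends e).1 \in X).
have copy_in e i : e \in F -> crossing X e -> (e \in U) ==> (val i == 0) ->
    copy e i \in [set a in arcsD U k F | enters tl hd X a].
  rewrite !inE /= /crossing /enters /Defs.head /Defs.tail /= => -> + ->.
  by case h1: ((ends e).1 \in X); case h2: ((ends e).2 \in X); rewrite /= ?h1 ?h2.
case: (boolP [exists e in F, crossing X e && (e \notin U)]).
- case/exists_inP => e eF /andP[ceX eU].
  have copy_inj : injective (copy e) by move=> i j [].
  rewrite -{1}(card_ord k.+1) -(card_imset _ copy_inj); apply: subset_leq_card.
  by apply/subsetP => _ /imsetP[i _ ->]; rewrite copy_in // (negbTE eU).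
- move/exists_inPn => crossing_unsafe.
  have CU : [set e in F | crossing X e] \subset U.
    apply/subsetP => e; rewrite inE => /andP[eF ceX].
    by have := crossing_unsafe e eF; rewrite ceX negbK.
  apply: leq_trans (feasible_crossing_card feas cutX CU) _.
  have copy_inj : injective (copy^~ ord0) by move=> e f [].
  rewrite -(card_imset _ copy_inj); apply: subset_leq_card.
  apply/subsetP => _ /imsetP[e eC ->]; move: eC; rewrite inE => /andP[eF ceX].
  by apply: copy_in; rewrite ?implybT.
Qed.

Lemma ranked_arb_arc_edge_inj B : ranked_arb tl hd r B -> {in B &, injective (@arc_edge E k)}.
Proof.
case=> hd_inj [rk rkB] _ [[e i] o] [[e' i'] o'] aB bB.
rewrite /arc_edge /= => ee'; subst e'.
move: (hd_inj _ _ aB bB) (rkB _ aB) (rkB _ bB); rewrite /Defs.head /Defs.tail /=.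
case: o o' {aB bB} => [] [] hdab lt1 lt2; try exact: hdab.
all: by have := ltn_trans lt1 lt2; rewrite ltnn.
Qed.

Lemma ranked_arb_cost (R : numDomainType) (c : E -> R) (B : {set Arc E k}) :
  (forall e, 0 <= c e)%R -> B \subset arcsD U k F -> ranked_arb tl hd r B ->
  (\sum_(a in B) c (arc_edge a) <= \sum_(e in F) c e)%R.
Proof.
move=> c_ge0 BD arbB; rewrite -(big_imset _ (ranked_arb_arc_edge_inj arbB)) /=.
apply: ler_sum_subset => //; apply/subsetP => _ /imsetP[a aB ->].
by have := subsetP BD a aB; rewrite inE => /andP[].
Qed.

Lemma ranked_arb_r_out B : ranked_arb tl hd r B -> r_out_arborescence ends r B.
Proof.
move=> arbB; split; first by move=> a; apply: ranked_arb_acyclic arbB a.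
by case: arbB => _ _ reach v _; apply: reach.
Qed.

End FaultTolerantConnectivity.

Local Open Scope ring_scope.

Theorem lemma1 (R : realDomainType) (V E : finType) (ends : E -> V * V)
  (U : {set E}) (c : E -> R) (k : nat) (r : V) (F : {set E}) :
  (0 < k)%N ->
  (forall e, 0 <= c e) ->
  feasible ends U k F ->
  exists T : {set Arc E k},
    r_out_karb ends (arcsD U k F) r T /\
    \sum_(a in T) c (arc_edge a) <= (k.+1)%:R * \sum_(e in F) c e.
Proof.
move=> _ c_ge0 feas.
have [P [disjP PD arbP]] := @disjoint_ranked_arbs _ _ _ _ r k.+1 _ (arcsD_indeg feas).
exists (\bigcup_(i < k.+1) P i); split.
  split; first by apply/bigcupsP => i _; apply: PD.
  exists (fun i : 'I_k.+1 => P i); split=> // [i j | i].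
    exact: disjP (ltn_ord i) (ltn_ord j).
  exact: ranked_arb_r_out (arbP i (ltn_ord i)).
rewrite partition_disjoint_bigcup; last by move=> i j; exact: disjP (ltn_ord i) (ltn_ord j).
rewrite mulr_natl -[in X in _ <= X](card_ord k.+1) -sumr_const.
by apply: ler_sum => i _; apply: ranked_arb_cost; [|apply: PD | apply: arbP].
Qed.
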